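(* Let $\mathbf A$ be a finite subdirectly irreducible cBCK-algebra, let $\mathcal K$ be a cover of $\mathcal V(\mathbf A)$ in the lattice of varieties of cBCK-algebras, and let $\mathbf B$ be a subdirectly irreducible member of $\mathcal K$. Then $\mathrm{h}(\mathbf B)\le \mathrm{h}(\mathbf A)+1$.
   Context: A BCK-algebra is an algebra $(A,\ominus,0)$ of type $(2,0)$ satisfying $((x\ominus y)\ominus(x\ominus z))\ominus(z\ominus y)=0$, $x\ominus 0=x$, $0\ominus x=0$, and ($x\ominus y=0$ and $y\ominus x=0$ imply $x=y$); it is ordered by $x\le y$ iff $x\ominus y=0$. A cBCK-algebra is a BCK-algebra satisfying $x\ominus(x\ominus y)=y\ominus(y\ominus x)$; cBCK-algebras form a variety. For an element $a$, $\mathrm{h}(a)=|[0,a]|-1$ (possibly infinite), and $\mathrm{h}(\mathbf B)=\sup\{\mathrm{h}(b)\mid b\in B\}$. $\mathcal V(\mathbf A)$ is the variety generated by $\mathbf A$. A cover of a variety $\mathcal V$ is a variety $\mathcal K\supsetneq\mathcal V$ such that no variety lies strictly between $\mathcal V$ and $\mathcal K$. *)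

From mathcomp Require Import all_boot.
From Stdlib Require Import List.
Set Implicit Arguments. Unset Strict Implicit. Unset Printing Implicit Defensive.

Record alg : Type := Alg { car :> Type; sub : car -> car -> car; zero : car }.

Definition le (B : alg) (x y : B) : Prop := sub x y = zero B.

Definition is_BCK (B : alg) : Prop :=
  (forall x y z : B, sub (sub (sub x y) (sub x z)) (sub z y) = zero B) /\
  (forall x : B, sub x (zero B) = x) /\
  (forall x : B, sub (zero B) x = zero B) /\
  (forall x y : B, sub x y = zero B -> sub y x = zero B -> x = y).

Definition is_cBCK (B : alg) : Prop :=
  is_BCK B /\ (forall x y : B, sub x (sub x y) = sub y (sub y x)).

Inductive term : Type := Var of nat | TZero | TSub of term & term.

Fixpoint eval (B : alg) (v : nat -> B) (t : term) : B :=
  match t with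
  | Var n => v n
  | TZero => zero B
  | TSub t1 t2 => sub (eval v t1) (eval v t2)
  end.

Definition identity := (term * term)%type.

Definition sat (B : alg) (e : identity) : Prop :=
  forall v : nat -> B, eval v e.1 = eval v e.2.

(* Varieties are equational classes Mod(Σ). *)
Definition Mod (S : identity -> Prop) (B : alg) : Prop := forall e, S e -> sat B e.

Definition Id (A : alg) : identity -> Prop := fun e => sat A e.
Definition V (A : alg) : alg -> Prop := Mod (Id A).

Definition class_incl (K L : alg -> Prop) : Prop := forall B, K B -> L B.
Definition class_eq (K L : alg -> Prop) : Prop := forall B, K B <-> L B.

Definition cBCK_variety (S : identity -> Prop) : Prop :=
  forall B, Mod S B -> is_cBCK B.

Definition is_cover_of_VA (A : alg) (S : identity -> Prop) : Prop :=
  cBCK_variety S /\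
  class_incl (V A) (Mod S) /\ ~ class_incl (Mod S) (V A) /\
  (forall S' : identity -> Prop,
     class_incl (V A) (Mod S') -> class_incl (Mod S') (Mod S) ->
     class_eq (Mod S') (V A) \/ class_eq (Mod S') (Mod S)).

Definition congruence (B : alg) (th : B -> B -> Prop) : Prop :=
  (forall x, th x x) /\ (forall x y, th x y -> th y x) /\
  (forall x y z, th x y -> th y z -> th x z) /\
  (forall x1 y1 x2 y2, th x1 y1 -> th x2 y2 -> th (sub x1 x2) (sub y1 y2)).

(* B is SI: there is a pair a <> b lying in every nontrivial congruence
   (i.e. the intersection of all non-identity congruences is non-identity). *)
Definition subdirectly_irreducible (B : alg) : Prop :=
  exists a b : B, a <> b /\
    forall th, congruence th -> (exists x y : B, x <> y /\ th x y) -> th a b.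

Definition fin_alg (T : finType) (op : T -> T -> T) (z : T) : alg := @Alg T op z.

Definition h_fin (T : finType) (op : T -> T -> T) (z : T) (a : T) : nat :=
  #|[pred x : T | (op z x == z) && (op x a == z)]|.-1.

Definition h_fin_alg (T : finType) (op : T -> T -> T) (z : T) : nat :=
  \max_(a : T) h_fin op z a.

(* h(B) <= n, for arbitrary B: every element b has |[0,b]| <= n+1, i.e. every
   duplicate-free list of elements of [0,b] has length <= n+1. *)
Definition height_le (B : alg) (n : nat) : Prop :=
  forall (b : B) (s : list B), List.NoDup s ->
    (forall x, List.In x s -> le (zero B) x /\ le x b) -> length s <= n.+1.

(* In a subdirectly irreducible cBCK-algebra [p ⊖ q] and [q ⊖ p] are orthogonal below any
   common upper bound, and the monolith rules out nonzero orthogonal pairs; so every interval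
   [[0, b]] is a chain.  Let [n = h(A)] and [E_k] be the identity [x ⊖ (k+1)·y = x ⊖ k·y].
   If some [[0, b]] in [B] had [n + 3] elements, then for [y] the least nonzero gap between
   them and [x] the largest one, [x ⊖ (n+1)·y <> 0]; hence [B] fails [E_(n+1)], and
   [i |-> x ⊓ i·y] embeds the Lukasiewicz chain [Ł_(n+1)] into [B].  Now [A] satisfies [E_n],
   while [Ł_(n+1)] satisfies [E_(n+1)] but not [E_n]; so adding [E_(n+1)] to the cover gives a
   variety strictly between [V(A)] (it contains [Ł_(n+1)]) and the cover (it misses [B]). *)

From mathcomp Require Import all_boot.
From mathcomp Require Import zify.
From Stdlib Require Import Classical.
Set Implicit Arguments. Unset Strict Implicit.

Local Notation "x ⊖ y" := (sub x y) (at level 50, left associativity).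
Local Notation "x ≤ y" := (sub x y = zero _) (at level 70).
Local Notation "x ⊓ y" := (x ⊖ (x ⊖ y)) (at level 40).

Definition iter_sub (D : alg) (x y : D) (k : nat) : D := iter k (fun u => u ⊖ y) x.

(* [x ⊓ k·y] in MV-algebra notation, where [x ⊖ k·y] is [iter_sub x y k]. *)
Definition mul_in (D : alg) (x y : D) (k : nat) : D := x ⊖ iter_sub x y k.

Lemma iter_subS (D : alg) (x y : D) k : iter_sub x y k.+1 = iter_sub x y k ⊖ y.
Proof. by []. Qed.

Lemma iter_subD (D : alg) (x y : D) j k :
  iter_sub x y (k + j) = iter_sub (iter_sub x y j) y k.
Proof. exact: iterD. Qed.

Lemma exists_max_in_list (X : Type) (R : X -> X -> Prop) (P : X -> Prop) (l : list X) :
  (forall x, R x x) -> (forall x y z, R x y -> R y z -> R x z) ->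
  (forall x y, List.In x l -> List.In y l -> R x y \/ R y x) ->
  (exists2 x, List.In x l & P x) ->
  exists m, [/\ List.In m l, P m & forall x, List.In x l -> P x -> R x m].
Proof.
move=> Rxx Rtrans; elim: l => [|a l IH] Rtotal [x0 x0l Px0] //.
have [[x xl Px] | noPl] := classic (exists2 x, List.In x l & P x); last first.
  have Pa : P a by case: x0l => [-> | x0l] //; case: noPl; exists x0.
  exists a; split=> [||y [<- | yl] Py] //; [by left | by case: noPl; exists y].
have [m [ml Pm maxm]] : exists m, [/\ List.In m l, P m & forall x, List.In x l -> P x -> R x m].
  by apply: IH (ex_intro2 _ _ x xl Px) => u v ul vl; apply: Rtotal; right.
have [[Pa Rma] | a_not_max] := classic (P a /\ R m a).
  exists a; split=> [||y [<- | yl] Py] //; first by left.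
  exact: Rtrans (maxm y yl Py) Rma.
exists m; split=> [||y [<- | yl] Py]; [by right | by [] | | exact: maxm].
by case: (Rtotal a m (or_introl erefl) (or_intror ml)) => // Rmy; case: a_not_max.
Qed.

Lemma NoDup_two (X : Type) (s : list X) : List.NoDup s -> 2 <= length s ->
  exists d1 d2, [/\ List.In d1 s, List.In d2 s & d1 <> d2].
Proof.
case: s => [|d1 [|d2 s]] // nds _; exists d1, d2; split; [by left | by right; left |].
by move=> d12; move: nds; rewrite d12 => /List.NoDup_cons_iff [+ _]; apply; left.
Qed.

Lemma NoDup_remove_in (X : Type) (s : list X) (a : X) : List.NoDup s -> List.In a s ->
  exists s', [/\ List.NoDup s', length s = (length s').+1 &
                 forall x, List.In x s' -> List.In x s /\ x <> a].
Proof.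
move=> nds ains; have [l1 [l2 es]] := List.in_split _ _ ains.
rewrite {s ains}es in nds *.
exists (l1 ++ l2); split; first exact: List.NoDup_remove_1 nds.
  by rewrite !List.length_app /= PeanoNat.Nat.add_succ_r.
move=> x xl; have {}xl := List.in_app_or _ _ _ xl; split.
  by apply: List.in_or_app; case: xl; [left | right; right].
by move=> xa; apply: (List.NoDup_remove_2 _ _ _ nds); rewrite -xa; apply: List.in_or_app.
Qed.

Section BCK.
Variable B : alg.
Hypothesis HB : is_BCK B.
Local Notation o := (zero B).

Lemma bck_ineq (x y z : B) : (x ⊖ y) ⊖ (x ⊖ z) ≤ z ⊖ y.
Proof. by case: HB => h _; apply: h. Qed.

Lemma subx0 (x : B) : x ⊖ o = x.
Proof. by case: HB => _ [h _]; apply: h. Qed.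

Lemma sub0x (x : B) : o ⊖ x = o.
Proof. by case: HB => _ [_ [h _]]; apply: h. Qed.

Lemma le_anti (x y : B) : x ≤ y -> y ≤ x -> x = y.
Proof. by case: HB => _ [_ [_ h]]; apply: h. Qed.

Lemma subxx (x : B) : x ⊖ x = o.
Proof. by have := bck_ineq x o o; rewrite !subx0. Qed.

Lemma le_subl (x y : B) : x ⊖ y ≤ x.
Proof. by have := bck_ineq x y o; rewrite !subx0 sub0x subx0. Qed.

Lemma le_meetr (x y : B) : x ⊓ y ≤ y.
Proof. by have := bck_ineq x o y; rewrite !subx0. Qed.

Lemma le_trans (x y z : B) : x ≤ y -> y ≤ z -> x ≤ z.
Proof. by move=> xy yz; have := bck_ineq x z y; rewrite xy yz !subx0. Qed.

Lemma le_sub2l (x y z : B) : x ≤ y -> z ⊖ y ≤ z ⊖ x.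
Proof. by move=> xy; have := bck_ineq z y x; rewrite xy subx0. Qed.

Lemma le_sub2r (x y z : B) : x ≤ y -> x ⊖ z ≤ y ⊖ z.
Proof. by move=> xy; have := bck_ineq x z y; rewrite xy subx0. Qed.

Lemma subAC (x y z : B) : x ⊖ y ⊖ z = x ⊖ z ⊖ y.
Proof.
suff le_AC (u v w : B) : u ⊖ v ⊖ w ≤ u ⊖ w ⊖ v by apply: le_anti.
exact: le_trans (le_sub2l (u ⊖ v) (le_meetr u w)) (bck_ineq u v (u ⊖ w)).
Qed.

Lemma le_subB2r (x y z : B) : (x ⊖ z) ⊖ (y ⊖ z) ≤ x ⊖ y.
Proof. by rewrite subAC; apply: bck_ineq. Qed.

Lemma iter_subAC (x y t : B) k : iter_sub (x ⊖ t) y k = iter_sub x y k ⊖ t.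
Proof. by elim: k => //= k ->; apply: subAC. Qed.

Lemma iter_subSr (x y : B) k : iter_sub x y k.+1 = iter_sub (x ⊖ y) y k.
Proof. by rewrite iter_subAC. Qed.

Lemma iter_sub_le (x y : B) k : iter_sub x y k ≤ x.
Proof. by elim: k => [|k IH] /=; [apply: subxx | apply: le_trans (le_subl _ _) IH]. Qed.

Lemma le_iter_sub2r (x x' y : B) k : x ≤ x' -> iter_sub x y k ≤ iter_sub x' y k.
Proof. by move=> xx'; elim: k => //= k; apply: le_sub2r. Qed.

Lemma le_iter_sub_idx (x y : B) i j : i <= j -> iter_sub x y j ≤ iter_sub x y i.
Proof. by move=> ij; rewrite -(subnK ij) iter_subD; apply: iter_sub_le. Qed.

Lemma iter_sub_neq0W (x y : B) i j : j <= i -> iter_sub x y i <> o -> iter_sub x y j <> o.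
Proof. by move=> ji + xj0; have := le_iter_sub_idx x y ji; rewrite xj0 subx0. Qed.

Lemma iter_sub_id (x y : B) k : x ⊖ y = x -> iter_sub x y k = x.
Proof. by move=> xy; elim: k => //= k ->. Qed.

Lemma iter_sub_stable (x y : B) i k : iter_sub x y i.+1 = iter_sub x y i -> i <= k ->
  iter_sub x y k = iter_sub x y i.
Proof. by move=> stab ik; rewrite -(subnK ik) iter_subD; apply: iter_sub_id. Qed.

Lemma iter_sub_inj (x y : B) K i j : iter_sub x y K.+1 <> iter_sub x y K ->
  i <= K.+1 -> j <= K.+1 -> iter_sub x y i = iter_sub x y j -> i = j.
Proof.
move=> unstable.
suff no_repeat i' j' : i' < j' -> j' <= K.+1 -> iter_sub x y i' <> iter_sub x y j'.
  move=> iK jK eij; case: (ltngtP i j) => // [ij | ji].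
  - by case: (no_repeat _ _ ij jK eij).
  - by case: (no_repeat _ _ ji iK (esym eij)).
move=> ij jK eij; have stab : iter_sub x y i'.+1 = iter_sub x y i'.
  apply: le_anti; first exact: le_iter_sub_idx.
  by rewrite {1}eij; apply: le_iter_sub_idx.
have iK : i' <= K by rewrite -ltnS (leq_trans ij jK).
by apply: unstable; rewrite !(iter_sub_stable stab) // (leq_trans iK).
Qed.

Lemma mul_in0 (x y : B) : mul_in x y 0 = o.
Proof. exact: subxx. Qed.

Lemma le_mul_in_idx (x y : B) i j : i <= j -> mul_in x y i ≤ mul_in x y j.
Proof. by move=> ij; apply: le_sub2l; apply: le_iter_sub_idx. Qed.

(* The ideal generated by [u] in a BCK-algebra is [{e | e ⊖ k·u = 0 for some k}]. *)
Definition in_ideal (u e : B) := exists k, iter_sub e u k = o.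

Lemma in_ideal0 u : in_ideal u o.
Proof. by exists 0. Qed.

Lemma in_ideal_le u w t : w ≤ t -> in_ideal u t -> in_ideal u w.
Proof. by move=> wt [k tk]; exists k; have := le_iter_sub2r u k wt; rewrite tk subx0. Qed.

Lemma in_ideal_sub u w t : in_ideal u (w ⊖ t) -> in_ideal u t -> in_ideal u w.
Proof.
move=> [k wtk] [l tl]; exists (l + k); rewrite iter_subD.
rewrite iter_subAC in wtk.
by have := le_iter_sub2r u l wtk; rewrite tl subx0.
Qed.

Definition ideal_cong (u x y : B) := in_ideal u (x ⊖ y) /\ in_ideal u (y ⊖ x).

Lemma ideal_cong_trans u x y z : ideal_cong u x y -> ideal_cong u y z -> ideal_cong u x z.
Proof.
move=> [xy yx] [yz zy]; split.
- by apply: in_ideal_sub _ xy; apply: in_ideal_le yz; apply: bck_ineq.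
- by apply: in_ideal_sub _ zy; apply: in_ideal_le yx; apply: bck_ineq.
Qed.

Lemma ideal_congP u : congruence (ideal_cong u).
Proof.
split; first by move=> x; rewrite /ideal_cong subxx; split; apply: in_ideal0.
split; first by move=> x y [].
split; first exact: ideal_cong_trans.
move=> x1 y1 x2 y2 [x1y1 y1x1] [x2y2 y2x2]; apply: (@ideal_cong_trans _ _ (y1 ⊖ x2)).
- by split; [apply: in_ideal_le x1y1 | apply: in_ideal_le y1x1]; apply: le_subB2r.
- by split; [apply: in_ideal_le y2x2 | apply: in_ideal_le x2y2]; apply: bck_ineq.
Qed.

Section Commutative.
Hypothesis Hcomm : forall x y : B, x ⊓ y = y ⊓ x.

Lemma meet_r (x y : B) : y ≤ x -> x ⊓ y = y.
Proof. by move=> yx; rewrite Hcomm yx subx0. Qed.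

Lemma le_meet (c x y : B) : c ≤ x -> c ≤ y -> c ≤ x ⊓ y.
Proof. by move=> cx cy; have := le_sub2l x (le_sub2l x cy); rewrite (meet_r cx). Qed.

Lemma subB2r (t u v : B) : t ≤ u -> u ≤ v -> (v ⊖ t) ⊖ (u ⊖ t) = v ⊖ u.
Proof.
move=> tu uv; rewrite -{1}(meet_r uv) (subAC v (v ⊖ u) t) Hcomm.
by rewrite (le_sub2l v tu) subx0.
Qed.

Lemma sub2r_inj (t u v : B) : t ≤ u -> u ≤ v -> u ⊖ t = v ⊖ t -> u = v.
Proof. by move=> tu uv e; apply: le_anti => //; rewrite -(subB2r tu uv) e subxx. Qed.

(* With [x ⊕ y := t ⊖ ((t ⊖ x) ⊖ y)] on [[0, t]], this is [a ⊖ (x ⊕ y) = a ⊖ x ⊖ y]. *)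
Lemma subD_bounded (t a x y : B) : a ≤ t -> a ⊖ (t ⊖ (t ⊖ x ⊖ y)) = a ⊖ x ⊖ y.
Proof.
move=> at_; have zt : t ⊖ x ⊖ y ≤ t := le_trans (le_subl _ y) (le_subl t x).
rewrite -{1}(meet_r at_) subAC (meet_r zt).
by rewrite (subAC (t ⊖ x)) (subAC t) (meet_r at_).
Qed.

Lemma subB2r_bounded (t u x y : B) : u ≤ x -> x ≤ t -> y ≤ t ->
  (y ⊖ u) ⊖ (x ⊖ u) = y ⊖ x.
Proof. by move=> ux xt yt; rewrite -(subD_bounded u (x ⊖ u) yt) (subB2r ux xt) (meet_r xt). Qed.

Lemma meet_subC_eq0 (t p q : B) : p ≤ t -> q ≤ t -> (p ⊖ q) ⊓ (q ⊖ p) = o.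
Proof.
(* [c] lies below [m := q ⊓ p] and [m ≤ m ⊖ c], which forces [c = 0]. *)
move=> pt qt; set c := (p ⊖ q) ⊓ (q ⊖ p).
have cp : c ≤ p := le_trans (le_subl _ _) (le_subl p q).
have cq : c ≤ q := le_trans (le_meetr _ _) (le_subl q p).
set m := q ⊓ p.
have cm : c ≤ m := le_meet cq cp.
have m_pc : m ≤ p ⊖ c by rewrite /m Hcomm; apply: le_sub2l; apply: le_subl.
have m_qc : m ≤ q ⊖ c by apply: le_sub2l; apply: le_meetr.
have m_mc : m ≤ m ⊖ c.
  by have := le_meet m_qc m_pc; rewrite (subB2r_bounded cp pt qt) subAC.
have mc : m ⊖ c = m := le_anti (le_subl m c) m_mc.
by rewrite -(meet_r cm) mc subxx.
Qed.

Lemma sub_id_le (t g e : B) : t ⊖ g = t -> e ≤ t -> e ⊖ g = e.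
Proof.
move=> tg et; apply: le_anti (le_subl e g) _.
by have := le_sub2l g (le_sub2l g et); rewrite (Hcomm g t) tg subxx subx0 Hcomm.
Qed.

Lemma in_ideal_orth_eq0 (t g e : B) : t ⊖ g = t -> in_ideal t e -> in_ideal g e -> e = o.
Proof.
move=> tg [k ek] [l el]; elim: k e ek el => [|k IH] e ek el; first exact: ek.
rewrite iter_subSr in ek.
have et : e ⊖ t = o.
  by apply: IH ek _; have := le_iter_sub2r g l (le_subl e t); rewrite el subx0.
by rewrite (iter_sub_id _ (sub_id_le tg et)) in el.
Qed.

Section SubdirectlyIrreducible.
Hypothesis HSI : subdirectly_irreducible B.

Lemma monolith_elem : exists2 e, e <> o & forall u, u <> o -> in_ideal u e.
Proof.
(* The congruence of the ideal generated by [u <> 0] identifies the monolith pair [a, a']. *)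
case: HSI => a [a' [aa' Ha]].
have Hu u : u <> o -> ideal_cong u a a'.
  move=> u0; apply: Ha; first exact: ideal_congP.
  exists u, o; split=> //; split; last by rewrite sub0x; apply: in_ideal0.
  by rewrite subx0; exists 1; apply: subxx.
have [aa'0 | aa'0] := classic (a ⊖ a' = o).
- exists (a' ⊖ a); last by move=> u /Hu [].
  by move=> a'a0; apply: aa'; apply: le_anti.
- by exists (a ⊖ a') => // u /Hu [].
Qed.

Lemma orth_eq0 (t g : B) : t ⊖ g = t -> t = o \/ g = o.
Proof.
move=> tg; case: monolith_elem => e e0 He.
have [t0 | t0] := classic (t = o); first by left.
have [g0 | g0] := classic (g = o); first by right.
by case: e0; apply: (in_ideal_orth_eq0 tg (He t t0) (He g g0)).
Qed.

Lemma iter_sub_succ_neq (x y : B) k : y <> o -> iter_sub x y k <> o ->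
  iter_sub x y k.+1 <> iter_sub x y k.
Proof. by move=> y0 xk0; rewrite iter_subS => /orth_eq0 []. Qed.

Lemma mul_in_inj (x y : B) N i j : y <> o -> iter_sub x y N <> o -> i <= N -> j <= N ->
  mul_in x y i = mul_in x y j -> i = j.
Proof.
move=> y0 nz iN jN e.
apply: (iter_sub_inj (iter_sub_succ_neq y0 nz)) (leqW iN) (leqW jN) _.
have := congr1 (sub x) e.
by rewrite /mul_in (meet_r (iter_sub_le x y i)) (meet_r (iter_sub_le x y j)).
Qed.

Lemma le_total_below (b p q : B) : p ≤ b -> q ≤ b -> p ≤ q \/ q ≤ p.
Proof.
move=> pb qb; have := meet_subC_eq0 pb qb.
by move=> /(le_anti (le_subl _ _)) /orth_eq0 []; [left | right].
Qed.

Section Interval.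
Variable b : B.

Section Step.
Variable y : B.
Hypothesis yb : y ≤ b.

Lemma mul_inS_sub u k : u ≤ b -> iter_sub u y k.+1 <> o ->
  mul_in u y k.+1 ⊖ mul_in u y k = y.
Proof.
move=> ub nz; rewrite /mul_in subAC (meet_r (iter_sub_le u y k)) iter_subS.
have wb : iter_sub u y k ≤ b := le_trans (iter_sub_le u y k) ub.
by case: (le_total_below yb wb) => [yw | wy]; [apply: meet_r | case: nz].
Qed.

Lemma mul_in_indep u u' k : u ≤ b -> u' ≤ b -> iter_sub u y k <> o -> iter_sub u' y k <> o ->
  mul_in u y k = mul_in u' y k.
Proof.
(* Both sides grow by exactly [y] at each step, and [[0, b]] is a chain. *)
move=> ub u'b; elim: k => [|k IH] nz nz'; first by rewrite !mul_in0.
have e := IH (iter_sub_neq0W (leqnSn k) nz) (iter_sub_neq0W (leqnSn k) nz').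
have mb v : v ≤ b -> mul_in v y k.+1 ≤ b by move=> vb; apply: le_trans (le_subl _ _) vb.
have [le | ge] := le_total_below (mb u ub) (mb u' u'b).
- apply: sub2r_inj (le_mul_in_idx u y (leqnSn k)) le _.
  by rewrite (mul_inS_sub ub nz) e (mul_inS_sub u'b nz').
- apply/esym; apply: sub2r_inj (le_mul_in_idx u' y (leqnSn k)) ge _.
  by rewrite (mul_inS_sub u'b nz') -e (mul_inS_sub ub nz).
Qed.

Lemma mul_in_sub x i j : x ≤ b -> iter_sub x y i <> o ->
  mul_in x y i ⊖ mul_in x y j = mul_in x y (i - j).
Proof.
move=> xb nz; have [ji | ij] := leqP j i; last first.
  have -> : i - j = 0 by apply/eqP; rewrite subn_eq0 ltnW.
  by rewrite mul_in0; apply: le_mul_in_idx; apply: ltnW.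
rewrite /mul_in subAC (meet_r (iter_sub_le x y j)) -{1}(subnK ji) iter_subD.
apply: (mul_in_indep (le_trans (iter_sub_le x y j) xb) xb _ (iter_sub_neq0W (leq_subr j i) nz)).
by rewrite -iter_subD subnK.
Qed.

End Step.

Definition gaps_ge (y : B) (s : list B) := forall d d', List.In d s -> List.In d' s ->
  d' ≤ d -> d' <> d -> y ≤ d ⊖ d'.

Lemma gaps_iter_sub_neq0 y k s : List.NoDup s -> k.+2 <= length s ->
  (forall d, List.In d s -> d ≤ b) -> gaps_ge y s -> exists2 x, List.In x s & iter_sub x y k <> o.
Proof.
elim: k s => [|k IH] s nds slen sb gaps.
  have [d1 [d2 [d1s d2s d12]]] := NoDup_two nds slen.
  have [d10 | d10] := classic (d1 = o); last by exists d1.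
  by exists d2 => // d20; apply: d12; rewrite d10; apply/esym.
have [x0 x0s] : exists2 x, List.In x s & True.
  by case: s slen {nds sb gaps} => // x0 s' _; exists x0; [left |].
have [a [as_ _ amax]] := exists_max_in_list (R := fun u v => u ≤ v) (P := fun _ => True)
  subxx (@le_trans) (fun u v us vs => le_total_below (sb u us) (sb v vs)) (ex_intro2 _ _ x0 x0s I).
have [s' [nds' slen' s's]] := NoDup_remove_in nds as_.
have s'len : k.+2 <= length s' by rewrite -ltnS -slen'.
have [x x's nz] := IH s' nds' s'len
  (fun d ds' => sb d (s's d ds').1)
  (fun d d' ds' d's' => gaps d d' (s's d ds').1 (s's d' d's').1).
(* [a] is the largest element of [s]; every other [x] in [s] lies below [a ⊖ y]. *)
exists a => // a0; apply: nz.
have [xs xa] := s's x x's.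
have x_ay : x ≤ a ⊖ y.
  by rewrite -(meet_r (amax x xs I)); apply: le_sub2l; apply: gaps => //; apply: amax.
by have := le_iter_sub2r y k x_ay; rewrite -iter_subSr a0 subx0.
Qed.

(* Take for [y] the least nonzero difference of two elements of [s]. *)
Lemma exists_long_iter_sub N s : List.NoDup s -> N.+2 <= length s ->
  (forall d, List.In d s -> d ≤ b) ->
  exists x y, [/\ x ≤ b, y ≤ b, y <> o & iter_sub x y N <> o].
Proof.
move=> nds slen sb.
pose L := List.flat_map (fun d => List.map (sub d) s) s.
have inL d d' : List.In d s -> List.In d' s -> List.In (d ⊖ d') L.
  move=> ds d's; apply/List.in_flat_map; exists d; split=> //.
  by apply/List.in_map_iff; exists d'.
have Lb l : List.In l L -> l ≤ b.
  move=> /List.in_flat_map [d [ds /List.in_map_iff [d' [<- _]]]].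
  exact: le_trans (le_subl d d') (sb d ds).
have [d1 [d2 [d1s d2s d12]]] := NoDup_two nds (leq_trans (isT : 2 <= N.+2) slen).
have nzL : exists2 l, List.In l L & l <> o.
  case: (le_total_below (sb _ d1s) (sb _ d2s)) => [d1d2 | d2d1].
  - by exists (d2 ⊖ d1); [apply: inL | move/(le_anti d1d2)].
  - by exists (d1 ⊖ d2); [apply: inL | move/le_anti/(_ d2d1)].
have [y [yL y0 ymin]] := exists_max_in_list (R := fun u v => v ≤ u) (P := fun l => l <> o)
  subxx (fun u v w uv vw => le_trans vw uv)
  (fun u v uL vL => le_total_below (Lb v vL) (Lb u uL)) nzL.
have gaps : gaps_ge y s.
  move=> d d' ds d's d'd d'nd; apply: ymin; first exact: inL.
  by move=> dd'; apply: d'nd; apply: le_anti.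
have [x xs nz] := gaps_iter_sub_neq0 nds slen sb gaps.
by exists x, y; split=> //; [apply: sb | apply: Lb].
Qed.

End Interval.
End SubdirectlyIrreducible.
End Commutative.
End BCK.

Fixpoint iter_sub_term (k : nat) : term :=
  if k is k'.+1 then TSub (iter_sub_term k') (Var 1) else Var 0.

Definition iter_sub_identity (k : nat) : identity := (iter_sub_term k.+1, iter_sub_term k).

Lemma eval_iter_sub_term (D : alg) (v : nat -> D) k :
  eval v (iter_sub_term k) = iter_sub (v 0) (v 1) k.
Proof. by elim: k => //= k ->. Qed.

Lemma sat_iter_sub_identity (D : alg) k :
  sat D (iter_sub_identity k) <-> forall x y : D, iter_sub x y k.+1 = iter_sub x y k.
Proof.
split=> [h x y | h v]; last by rewrite /= !eval_iter_sub_term; apply: h.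
by have := h (fun i => if i is 0 then x else y); rewrite /= !eval_iter_sub_term.
Qed.

Lemma fin_sat_iter_sub_identity (T : finType) (op : T -> T -> T) (z : T) K :
  is_BCK (fin_alg op z) -> h_fin_alg op z <= K -> sat (fin_alg op z) (iter_sub_identity K).
Proof.
move=> HA hK; apply/sat_iter_sub_identity => x y; apply: NNPP => unstable.
pose f (i : 'I_K.+2) : T := iter_sub (x : fin_alg op z) y i.
have f_inj : injective f.
  move=> i j fij; apply/val_inj/(iter_sub_inj HA unstable _ _ fij); by rewrite -ltnS.
pose P := [pred w : T | (op z w == z) && (op w x == z)].
have fP : [seq f i | i in 'I_K.+2] \subset P.
  apply/subsetP => w /imageP [i _ ->]; rewrite inE; apply/andP; split; apply/eqP.
  - exact: (sub0x HA).
  - exact: (iter_sub_le HA).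
have := subset_leq_card fP; rewrite (card_image f_inj) card_ord.
have := leq_trans (leq_bigmax x) hK; rewrite /h_fin -/P.
by case: #|P| => //= m; lia.
Qed.

Section Lukasiewicz.
Variable N : nat.

Definition luk_sub (i j : 'I_N.+1) : 'I_N.+1 := inord (i - j).

Definition Luk : alg := @Alg 'I_N.+1 luk_sub ord0.

Lemma val_luk_sub (i j : 'I_N.+1) : luk_sub i j = i - j :> nat.
Proof. by rewrite /luk_sub inordK // ltnS (leq_trans (leq_subr j i)) // -ltnS. Qed.

Lemma val_iter_sub_luk (i j : Luk) k : (iter_sub i j k : 'I_N.+1) = i - j * k :> nat.
Proof.
elim: k => [|k IH]; first by rewrite muln0 subn0.
by rewrite iter_subS val_luk_sub IH mulnS addnC subnDA.
Qed.

Lemma Luk_sat : sat Luk (iter_sub_identity N).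
Proof.
apply/sat_iter_sub_identity => i j; apply: ord_inj; rewrite !val_iter_sub_luk.
have [-> | j0] := posnP j; first by rewrite !mul0n.
have iN : i <= j * N by apply: leq_trans (ltnSE (ltn_ord i)) _; rewrite leq_pmull.
by apply/eqP; rewrite (eqP iN) subn_eq0 (leq_trans iN) // leq_mul2l leqnSn orbT.
Qed.

End Lukasiewicz.

Lemma Luk_not_sat n : ~ sat (Luk n.+1) (iter_sub_identity n).
Proof.
move/sat_iter_sub_identity/(_ ord_max (inord 1))/(congr1 (@nat_of_ord _)).
by rewrite !val_iter_sub_luk /= inordK // !mul1n subnn subSnn.
Qed.

Lemma eval_morph (D1 D2 : alg) (f : D1 -> D2) :
  (forall a b, f (a ⊖ b) = f a ⊖ f b) -> f (zero D1) = zero D2 ->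
  forall v t, f (eval v t) = eval (f \o v) t.
Proof. by move=> fsub f0 v; elim=> //= t1 IH1 t2 IH2; rewrite fsub IH1 IH2. Qed.

Lemma Mod_inj_morph (D1 D2 : alg) (f : D1 -> D2) (S : identity -> Prop) :
  (forall a b, f (a ⊖ b) = f a ⊖ f b) -> f (zero D1) = zero D2 -> injective f ->
  Mod S D2 -> Mod S D1.
Proof. by move=> fsub f0 finj SD2 e Se v; apply: finj; rewrite !(eval_morph fsub f0); apply: SD2. Qed.

Lemma Mod_Luk (B : alg) (S : identity -> Prop) (b x y : B) N :
  is_cBCK B -> subdirectly_irreducible B -> x ≤ b -> y ≤ b -> y <> zero B ->
  iter_sub x y N <> zero B -> Mod S B -> Mod S (Luk N).
Proof.
move=> [HB Hcomm] HSI xb yb y0 xN0.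
have nz (i : 'I_N.+1) : iter_sub x y i <> zero B := iter_sub_neq0W HB (ltnSE (ltn_ord i)) xN0.
apply: (@Mod_inj_morph _ _ (fun i : Luk N => mul_in x y i)).
- by move=> i j /=; rewrite val_luk_sub (mul_in_sub HB Hcomm HSI yb j xb (nz i)).
- exact: mul_in0 HB x y.
- move=> i j eij; apply: ord_inj.
  exact: (mul_in_inj HB Hcomm HSI y0 xN0 (ltnSE (ltn_ord i)) (ltnSE (ltn_ord j)) eij).
Qed.

Lemma Luk_notin_V (A : alg) n : sat A (iter_sub_identity n) -> ~ V A (Luk n.+1).
Proof. by move=> An VLuk; apply: (@Luk_not_sat n); apply: VLuk. Qed.

(* [Mod (S ∪ {e})] lies between [V A] and [Mod S], and [D] keeps it from being [V A]. *)
Lemma cover_sat (A D : alg) (S : identity -> Prop) (e : identity) :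
  is_cover_of_VA A S -> sat A e -> Mod S D -> sat D e -> ~ V A D ->
  forall C, Mod S C -> sat C e.
Proof.
move=> [_ [VA_S [_ maxS]]] Ae SD De nVD C SC.
pose S' e' := S e' \/ e' = e.
have VA_S' : class_incl (V A) (Mod S') by move=> D' VD' e' [Se' | ->]; [apply: VA_S | exact: VD' Ae].
have S'_S : class_incl (Mod S') (Mod S) by move=> D' S'D' e' Se'; apply: S'D'; left.
have S'D : Mod S' D by move=> e' [Se' | ->]; [apply: SD |].
case: (maxS S' VA_S' S'_S) => [S'_VA | S'_eq].
- by case: nVD; apply/S'_VA.
- by apply: (proj2 (S'_eq C) SC); right.
Qed.

Theorem mainTheorem6 (T : finType) (op : T -> T -> T) (z : T)
  (S : identity -> Prop) (B : alg) :
  is_cBCK (fin_alg op z) ->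
  subdirectly_irreducible (fin_alg op z) ->
  is_cover_of_VA (fin_alg op z) S ->
  Mod S B ->
  subdirectly_irreducible B ->
  height_le B (h_fin_alg op z).+1.
Proof.
move=> HA _ cover SB SI_B b s nds s_b.
have HcB := cover.1 B SB; have [HB Hcomm] := HcB.
set n := h_fin_alg op z.
case: (leqP (length s) n.+2) => // long; exfalso.
have [x [y [xb yb y0 xN0]]] :=
  exists_long_iter_sub HB Hcomm SI_B nds long (fun d ds => (s_b d ds).2).
have A_E k : n <= k -> sat (fin_alg op z) (iter_sub_identity k) :=
  fin_sat_iter_sub_identity HA.1.
have B_E : sat B (iter_sub_identity n.+1).
  apply: (cover_sat cover (A_E _ (leqnSn n)) (Mod_Luk HcB SI_B xb yb y0 xN0 SB)) SB.
  - exact: Luk_sat.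
  - exact: Luk_notin_V (A_E _ (leqnn n)).
by move/sat_iter_sub_identity/(_ x y): B_E; apply: (iter_sub_succ_neq HB Hcomm SI_B y0 xN0).
Qed.
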